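(* The minimal typing algorithm of System $\mathsf{F_{<:}^{K\top}}$ terminates on every $\mathsf{F_{<:}^\top}$ term-in-context $\Theta\vdash^\top t$.
   Context: System $\mathsf{F_{<:}^{K\top}}$: raw types $T ::= \top \mid X \mid T\to T \mid \forall^{\mathsf K}(X<:T).T \mid \forall^\top(X<:T).T$, up to $\alpha$-conversion. Contexts $\Theta$: finite sequences of $X<:T$ or $x:T$ with distinct variables, each type well-formed over the preceding part. Raw terms $t ::= \mathsf{top}\mid x\mid\lambda(x:T).t\mid\Lambda(X<:T).t\mid t\,t\mid t\{T\}$. Algorithmic subtyping $\Theta\vdash_A S<:T$: (1) $\Theta\vdash_A T<:\top$; (2) $\Theta\vdash_A X<:X$; (3) if $T\not\equiv\top,X$ and $\Theta,X<:S,\Theta'\vdash_A S<:T$ then $\Theta,X<:S,\Theta'\vdash_A X<:T$; (4) from $S'<:S$, $T<:T'$ infer $S\to T<:S'\to T'$; (5) from $\Theta,X<:S\vdash_A T<:T'$ infer $\forall^{\mathsf K}(X<:S).T<:\forall^{\mathsf K}(X<:S).T'$; (6) from $\Theta\vdash_A T_0<:S_0$, $\Theta,X<:S_0\vdash_A S_1<:T_1$ infer $\forall^{\mathsf K}(X<:S_0).S_1<:\forall^\top(X<:T_0).T_1$; (7) from $\Theta\vdash_A T_0<:S_0$, $\Theta,X<:\top\vdash_A S_1<:T_1$ infer $\forall^\top(X<:S_0).S_1<:\forall^\top(X<:T_0).T_1$. The subtyping algorithm is the deterministic goal-directed search for such derivations (at most one rule applies to each judgement). $\Theta^*(T)=\Theta^*(S)$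 if $T\equiv X$ and $X<:S$ occurs in $\Theta$; $\Theta^*(T)=T$ otherwise. Minimal typing $\Theta\vdash_M t:T$: $\Theta,x:T,\Theta'\vdash_M x:T$; $\Theta\vdash_M\mathsf{top}:\top$; from $\Theta,x:S\vdash_M t:T$ infer $\Theta\vdash_M\lambda(x:S).t:S\to T$; from $\Theta\vdash_M r:R$, $\Theta\vdash_M s:S$, $\Theta\vdash S<:S'$ with $\Theta^*(R)=S'\to T$ infer $\Theta\vdash_M r\,s:T$; from $\Theta,X<:S\vdash_M t:T$ infer $\Theta\vdash_M\Lambda(X<:S).t:\forall^{\mathsf K}(X<:S).T$; from $\Theta\vdash_M r:R$, $\Theta\vdash S<:S'$ with $\Theta^*(R)=\forall^{\mathsf K}(X<:S').T$ or $\forall^\top(X<:S').T$ infer $\Theta\vdash_M r\{S\}:T[S/X]$. The minimal typing algorithm computes, by recursion on the structure of $t$, the unique $T$ with $\Theta\vdash_M t:T$ or rejects, deciding each subtyping premise $\Theta\vdash S<:S'$ by running the subtyping algorithm on $\Theta\vdash_A S<:S'$. An $\mathsf{F_{<:}^\top}$ term-in-context is one whose context and type annotations contain only $\forall^\top$ quantifiers. *)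

(* System F_{<:}^{K T}: raw syntax (de Bruijn), algorithmic subtyping and the
   minimal typing algorithm, given as big-step "run" relations of the
   deterministic algorithms (so that "the algorithm terminates on input i"
   is "some outcome is related to i"). *)
From Stdlib Require Import Arith List.
Import ListNotations.

(* ---------- Types ----------
   Type variables are de Bruijn indices counting only *type*-variable
   binders; alpha-equivalence is syntactic equality. *)
Inductive ty : Type :=
| TTop  : ty
| TVar  : nat -> ty
| TArr  : ty -> ty -> ty
| TAllK : ty -> ty -> ty   (* forall^K (X <: T1). T2, X bound in T2 *)
| TAllT : ty -> ty -> ty.  (* forall^T (X <: T1). T2, X bound in T2 *)

Fixpoint tshift (c : nat) (T : ty) : ty :=
  match T with
  | TTop => TTop
  | TVar n => if n <? c then TVar n else TVar (S n)
  | TArr T1 T2 => TArr (tshift c T1) (tshift c T2)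
  | TAllK T1 T2 => TAllK (tshift c T1) (tshift (S c) T2)
  | TAllT T1 T2 => TAllT (tshift c T1) (tshift (S c) T2)
  end.

Fixpoint tshiftn (k : nat) (T : ty) : ty :=
  match k with 0 => T | S k' => tshift 0 (tshiftn k' T) end.

Fixpoint tsubst (j : nat) (U : ty) (T : ty) : ty :=
  match T with
  | TTop => TTop
  | TVar n => if n <? j then TVar n
              else if n =? j then tshiftn j U
              else TVar (pred n)
  | TArr T1 T2 => TArr (tsubst j U T1) (tsubst j U T2)
  | TAllK T1 T2 => TAllK (tsubst j U T1) (tsubst (S j) U T2)
  | TAllT T1 T2 => TAllT (tsubst j U T1) (tsubst (S j) U T2)
  end.

Definition open_ty (T U : ty) : ty := tsubst 0 U T.

(* ---------- Terms ----------
   Term variables are de Bruijn indices counting only term binders,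
   type variables count only type binders. *)
Inductive tm : Type :=
| tTop  : tm
| tVar  : nat -> tm
| tAbs  : ty -> tm -> tm
| tTAbs : ty -> tm -> tm
| tApp  : tm -> tm -> tm
| tTApp : tm -> ty -> tm.

(* ---------- Contexts ----------  (head = most recent binding) *)
Inductive entry : Type :=
| CTVar : ty -> entry
| CVar  : ty -> entry.

Definition ctx := list entry.

(* bound of type variable n, expressed relative to the whole context *)
Fixpoint get_bound (G : ctx) (n : nat) : option ty :=
  match G with
  | [] => None
  | CTVar T :: G' =>
      match n with
      | 0 => Some (tshift 0 T)
      | S m => option_map (tshift 0) (get_bound G' m)
      end
  | CVar _ :: G' => get_bound G' n
  end.

(* type of term variable n, expressed relative to the whole context *)
Fixpoint get_var (G : ctx) (n : nat) : option ty :=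
  match G with
  | [] => None
  | CVar T :: G' =>
      match n with
      | 0 => Some T
      | S m => get_var G' m
      end
  | CTVar _ :: G' => option_map (tshift 0) (get_var G' n)
  end.

Fixpoint wf_ty (k : nat) (T : ty) : Prop :=
  match T with
  | TTop => True
  | TVar n => n < k
  | TArr T1 T2 => wf_ty k T1 /\ wf_ty k T2
  | TAllK T1 T2 => wf_ty k T1 /\ wf_ty (S k) T2
  | TAllT T1 T2 => wf_ty k T1 /\ wf_ty (S k) T2
  end.

Fixpoint ntv (G : ctx) : nat :=
  match G with
  | [] => 0
  | CTVar _ :: G' => S (ntv G')
  | CVar _ :: G' => ntv G'
  end.

Fixpoint nvar (G : ctx) : nat :=
  match G with
  | [] => 0
  | CTVar _ :: G' => nvar G'
  | CVar _ :: G' => S (nvar G')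
  end.

Fixpoint wf_ctx (G : ctx) : Prop :=
  match G with
  | [] => True
  | CTVar T :: G' => wf_ctx G' /\ wf_ty (ntv G') T
  | CVar T :: G' => wf_ctx G' /\ wf_ty (ntv G') T
  end.

Fixpoint wf_tm (kt kv : nat) (t : tm) : Prop :=
  match t with
  | tTop => True
  | tVar n => n < kv
  | tAbs T t1 => wf_ty kt T /\ wf_tm kt (S kv) t1
  | tTAbs T t1 => wf_ty kt T /\ wf_tm (S kt) kv t1
  | tApp t1 t2 => wf_tm kt kv t1 /\ wf_tm kt kv t2
  | tTApp t1 T => wf_tm kt kv t1 /\ wf_ty kt T
  end.

Fixpoint top_only_ty (T : ty) : Prop :=
  match T with
  | TTop | TVar _ => True
  | TArr T1 T2 => top_only_ty T1 /\ top_only_ty T2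
  | TAllK _ _ => False
  | TAllT T1 T2 => top_only_ty T1 /\ top_only_ty T2
  end.

Fixpoint top_only_ctx (G : ctx) : Prop :=
  match G with
  | [] => True
  | CTVar T :: G' => top_only_ty T /\ top_only_ctx G'
  | CVar T :: G' => top_only_ty T /\ top_only_ctx G'
  end.

Fixpoint top_only_tm (t : tm) : Prop :=
  match t with
  | tTop | tVar _ => True
  | tAbs T t1 => top_only_ty T /\ top_only_tm t1
  | tTAbs T t1 => top_only_ty T /\ top_only_tm t1
  | tApp t1 t2 => top_only_tm t1 /\ top_only_tm t2
  | tTApp t1 T => top_only_tm t1 /\ top_only_ty T
  end.

Definition Ftop_term_in_context (G : ctx) (t : tm) : Prop :=
  wf_ctx G /\ wf_tm (ntv G) (nvar G) t /\ top_only_ctx G /\ top_only_tm t.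

(* Premises are evaluated left to right; a failed premise makes
   the algorithm reject immediately; when no rule applies it rejects. *)

Definition no_rule (S T : ty) : bool :=
  match S, T with
  | _, TTop => false
  | TVar _, _ => false
  | TArr _ _, TArr _ _ => false
  | TAllK _ _, TAllK _ _ => false
  | TAllK _ _, TAllT _ _ => false
  | TAllT _ _, TAllT _ _ => false
  | _, _ => true
  end.

Inductive sub_run : ctx -> ty -> ty -> bool -> Prop :=
(* (1) *)
| SR_top : forall G S, sub_run G S TTop true
(* (2) *)
| SR_refl : forall G n, sub_run G (TVar n) (TVar n) true
(* (3) *)
| SR_var : forall G n B T b,
    T <> TTop -> T <> TVar n -> get_bound G n = Some B ->
    sub_run G B T b -> sub_run G (TVar n) T b
| SR_var_unbound : forall G n T,
    T <> TTop -> T <> TVar n -> get_bound G n = None ->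
    sub_run G (TVar n) T false
(* (4) *)
| SR_arr_fail : forall G S1 S2 T1 T2,
    sub_run G T1 S1 false -> sub_run G (TArr S1 S2) (TArr T1 T2) false
| SR_arr : forall G S1 S2 T1 T2 b,
    sub_run G T1 S1 true -> sub_run G S2 T2 b ->
    sub_run G (TArr S1 S2) (TArr T1 T2) b
(* (5) *)
| SR_allK : forall G S T T' b,
    sub_run (CTVar S :: G) T T' b -> sub_run G (TAllK S T) (TAllK S T') b
| SR_allK_fail : forall G S T S' T',
    S <> S' -> sub_run G (TAllK S T) (TAllK S' T') false
(* (6) *)
| SR_KT_fail : forall G S0 S1 T0 T1,
    sub_run G T0 S0 false -> sub_run G (TAllK S0 S1) (TAllT T0 T1) false
| SR_KT : forall G S0 S1 T0 T1 b,
    sub_run G T0 S0 true -> sub_run (CTVar S0 :: G) S1 T1 b ->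
    sub_run G (TAllK S0 S1) (TAllT T0 T1) b
(* (7) *)
| SR_TT_fail : forall G S0 S1 T0 T1,
    sub_run G T0 S0 false -> sub_run G (TAllT S0 S1) (TAllT T0 T1) false
| SR_TT : forall G S0 S1 T0 T1 b,
    sub_run G T0 S0 true -> sub_run (CTVar TTop :: G) S1 T1 b ->
    sub_run G (TAllT S0 S1) (TAllT T0 T1) b
| SR_none : forall G S T, no_rule S T = true -> sub_run G S T false.

Inductive expose : ctx -> ty -> ty -> Prop :=
| EX_var : forall G n B R,
    get_bound G n = Some B -> expose G B R -> expose G (TVar n) R
| EX_var_unbound : forall G n,
    get_bound G n = None -> expose G (TVar n) (TVar n)
| EX_other : forall G T, (forall n, T <> TVar n) -> expose G T T.

(* ---------- The minimal typing algorithm ----------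
   ty_run G t (Some T): the algorithm terminates returning T;
   ty_run G t None    : the algorithm terminates rejecting t. *)
Inductive ty_run : ctx -> tm -> option ty -> Prop :=
| TR_top : forall G, ty_run G tTop (Some TTop)
| TR_var : forall G n, ty_run G (tVar n) (get_var G n)
| TR_abs : forall G S t r,
    ty_run (CVar S :: G) t r -> ty_run G (tAbs S t) (option_map (TArr S) r)
| TR_tabs : forall G S t r,
    ty_run (CTVar S :: G) t r -> ty_run G (tTAbs S t) (option_map (TAllK S) r)
| TR_app_fail1 : forall G r s,
    ty_run G r None -> ty_run G (tApp r s) None
| TR_app_fail2 : forall G r s R,
    ty_run G r (Some R) -> ty_run G s None -> ty_run G (tApp r s) None
| TR_app_notarr : forall G r s R S R',
    ty_run G r (Some R) -> ty_run G s (Some S) -> expose G R R' ->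
    (forall A B, R' <> TArr A B) -> ty_run G (tApp r s) None
| TR_app : forall G r s R S S' T b,
    ty_run G r (Some R) -> ty_run G s (Some S) -> expose G R (TArr S' T) ->
    sub_run G S S' b ->
    ty_run G (tApp r s) (if b then Some T else None)
| TR_tapp_fail : forall G r S,
    ty_run G r None -> ty_run G (tTApp r S) None
| TR_tapp_notall : forall G r S R R',
    ty_run G r (Some R) -> expose G R R' ->
    (forall A B, R' <> TAllK A B) -> (forall A B, R' <> TAllT A B) ->
    ty_run G (tTApp r S) None
| TR_tapp_K : forall G r S R S' T b,
    ty_run G r (Some R) -> expose G R (TAllK S' T) -> sub_run G S S' b ->
    ty_run G (tTApp r S) (if b then Some (open_ty T S) else None)
| TR_tapp_T : forall G r S R S' T b,
    ty_run G r (Some R) -> expose G R (TAllT S' T) -> sub_run G S S' b ->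
    ty_run G (tTApp r S) (if b then Some (open_ty T S) else None).

Definition min_typing_terminates (G : ctx) (t : tm) : Prop :=
  exists r, ty_run G t r.

From Stdlib Require Import Arith List Lia.
Import ListNotations.

(* Weigh a type variable one more than its bound, and a variable bound by a
   forall^T as if its bound were Top.  Rules (3), (4) and (7) of the subtyping
   algorithm then strictly decrease the total weight of the judgement, so
   subtyping terminates on F^T types in an F^T context.  Rule (6) may increase
   it, since it moves the body of the right-hand forall^T under the bound of
   the left-hand forall^K.  But the minimal type of an F^T term is an F^T type
   except for forall^K quantifiers along its right spine; this shape survives
   exposure and instantiation by F^T types, and a subtyping problem with such a
   type on the left and an F^T type on the right terminates by structural
   induction on the left type, its contravariant premises being F^T
   problems. *)

(* [env] gives the weights of the free type variables; uncovered ones weigh 1. *)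
Fixpoint ty_weight (env : list nat) (T : ty) : nat :=
  match T with
  | TTop => 1
  | TVar n => nth n env 1
  | TArr A B => 1 + ty_weight env A + ty_weight env B
  | TAllK A B => 1 + ty_weight env A + ty_weight ((1 + ty_weight env A) :: env) B
  | TAllT A B => 1 + ty_weight env A + ty_weight (2 :: env) B
  end.

Fixpoint insert_at (c a : nat) (env : list nat) : list nat :=
  match c with
  | 0 => a :: env
  | S c' => hd 1 env :: insert_at c' a (tl env)
  end.

Lemma nth_insert_at_lt c a env n :
  n < c -> nth n (insert_at c a env) 1 = nth n env 1.
Proof.
  revert env n; induction c as [|c IH]; intros env n Hn; [lia|].
  destruct n as [|n], env as [|x env]; simpl; auto; rewrite IH by lia;
    [destruct n|]; reflexivity.
Qed.

Lemma nth_insert_at_ge c a env n :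
  c <= n -> nth (S n) (insert_at c a env) 1 = nth n env 1.
Proof.
  revert env n; induction c as [|c IH]; intros env n Hn; [reflexivity|].
  destruct n as [|n]; [lia|].
  destruct env as [|x env]; simpl; rewrite IH by lia; [destruct n|]; reflexivity.
Qed.

Lemma ty_weight_tshift T c a env :
  ty_weight (insert_at c a env) (tshift c T) = ty_weight env T.
Proof.
  revert c a env; induction T as [|n|T1 IH1 T2 IH2|T1 IH1 T2 IH2|T1 IH1 T2 IH2];
    intros c a env; simpl.
  - reflexivity.
  - destruct (Nat.ltb_spec n c); simpl.
    + now apply nth_insert_at_lt.
    + now apply nth_insert_at_ge.
  - now rewrite IH1, IH2.
  - rewrite IH1; do 2 f_equal; exact (IH2 (S c) a (_ :: env)).
  - rewrite IH1; do 2 f_equal; exact (IH2 (S c) a (_ :: env)).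
Qed.

Fixpoint ctx_weights (G : ctx) : list nat :=
  match G with
  | [] => []
  | CTVar B :: G' => (1 + ty_weight (ctx_weights G') B) :: ctx_weights G'
  | CVar _ :: G' => ctx_weights G'
  end.

Lemma get_bound_weight G n B :
  get_bound G n = Some B -> nth n (ctx_weights G) 1 = 1 + ty_weight (ctx_weights G) B.
Proof.
  revert n B; induction G as [|[T|T] G IH]; intros n B HB; simpl in HB; [discriminate| |].
  - destruct n as [|n].
    + injection HB as <-; exact (f_equal S (eq_sym (ty_weight_tshift T 0 _ _))).
    + destruct (get_bound G n) as [B'|] eqn:E; simpl in HB; [|discriminate].
      injection HB as <-; simpl; rewrite (IH _ _ E).
      exact (f_equal S (eq_sym (ty_weight_tshift B' 0 _ _))).
  - exact (IH n B HB).
Qed.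

Lemma top_only_tshift T c : top_only_ty T -> top_only_ty (tshift c T).
Proof.
  revert c; induction T; simpl; intros; try destruct (_ <? _); simpl; intuition.
Qed.

Lemma top_only_tshiftn k T : top_only_ty T -> top_only_ty (tshiftn k T).
Proof. induction k; simpl; auto using top_only_tshift. Qed.

Lemma top_only_tsubst T j U :
  top_only_ty T -> top_only_ty U -> top_only_ty (tsubst j U T).
Proof.
  revert j; induction T; simpl; intros j HT HU;
    try (split; [apply IHT1 | apply IHT2]); try tauto.
  destruct (n <? j), (n =? j); simpl; auto using top_only_tshiftn.
Qed.

Lemma top_only_get_bound G n B :
  top_only_ctx G -> get_bound G n = Some B -> top_only_ty B.
Proof.
  revert n B; induction G as [|[T|T] G IH]; intros n B HG HB; simpl in HG, HB;
    [discriminate| |exact (IH n B (proj2 HG) HB)].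
  destruct n as [|n].
  - injection HB as <-; apply top_only_tshift; tauto.
  - destruct (get_bound G n) as [B'|] eqn:E; simpl in HB; [|discriminate].
    injection HB as <-; apply top_only_tshift; eapply IH; eauto; tauto.
Qed.

Lemma top_only_get_var G n T :
  top_only_ctx G -> get_var G n = Some T -> top_only_ty T.
Proof.
  revert n T; induction G as [|[B|B] G IH]; intros n T HG HT; simpl in HG, HT;
    [discriminate| |].
  - destruct (get_var G n) as [T'|] eqn:E; simpl in HT; [|discriminate].
    injection HT as <-; apply top_only_tshift; eapply IH; eauto; tauto.
  - destruct n as [|n]; [injection HT as <-; tauto | eapply IH; eauto; tauto].
Qed.

(* forall^K may occur only along the right spine: every domain and every
   bound is an F^T type. *)
Fixpoint kpos_ty (T : ty) : Prop :=
  match T with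
  | TTop | TVar _ => True
  | TArr A B | TAllK A B | TAllT A B => top_only_ty A /\ kpos_ty B
  end.

Lemma kpos_of_top_only T : top_only_ty T -> kpos_ty T.
Proof. induction T; simpl; tauto. Qed.

Lemma kpos_tsubst T j U : kpos_ty T -> top_only_ty U -> kpos_ty (tsubst j U T).
Proof.
  revert j; induction T; simpl; intros j HT HU;
    try (split; [apply top_only_tsubst | apply IHT2]; tauto).
  - exact I.
  - destruct (n <? j), (n =? j); simpl; auto using kpos_of_top_only, top_only_tshiftn.
Qed.

Definition sub_terminates (G : ctx) (S T : ty) : Prop := exists b, sub_run G S T b.

Lemma sub_terminates_top G S : sub_terminates G S TTop.
Proof. exists true; constructor. Qed.

Lemma sub_terminates_no_rule G S T : no_rule S T = true -> sub_terminates G S T.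
Proof. exists false; now constructor. Qed.

Ltac sub_trivial :=
  solve [apply sub_terminates_top | apply sub_terminates_no_rule; reflexivity].

Lemma sub_terminates_var G n T :
  (forall B, get_bound G n = Some B -> sub_terminates G B T) ->
  sub_terminates G (TVar n) T.
Proof.
  intros Hbound.
  assert (Hpromote : T <> TTop -> T <> TVar n -> sub_terminates G (TVar n) T).
  { intros Htop Hvar; destruct (get_bound G n) as [B|] eqn:E.
    - destruct (Hbound B eq_refl) as [b Hb]; exists b; eapply SR_var; eauto.
    - exists false; now apply SR_var_unbound. }
  destruct T as [|m| | |]; try (apply Hpromote; discriminate).
  - apply sub_terminates_top.
  - destruct (Nat.eq_dec m n) as [->|Hne].
    + exists true; constructor.
    + apply Hpromote; congruence.
Qed.

Lemma sub_terminates_arr G S1 S2 T1 T2 :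
  sub_terminates G T1 S1 -> sub_terminates G S2 T2 ->
  sub_terminates G (TArr S1 S2) (TArr T1 T2).
Proof.
  intros [[|] H1] [b H2].
  - exists b; now apply SR_arr.
  - exists false; now apply SR_arr_fail.
Qed.

Lemma sub_terminates_allKT G S0 S1 T0 T1 :
  sub_terminates G T0 S0 -> sub_terminates (CTVar S0 :: G) S1 T1 ->
  sub_terminates G (TAllK S0 S1) (TAllT T0 T1).
Proof.
  intros [[|] H0] [b H1].
  - exists b; now apply SR_KT.
  - exists false; now apply SR_KT_fail.
Qed.

Lemma sub_terminates_allTT G S0 S1 T0 T1 :
  sub_terminates G T0 S0 -> sub_terminates (CTVar TTop :: G) S1 T1 ->
  sub_terminates G (TAllT S0 S1) (TAllT T0 T1).
Proof.
  intros [[|] H0] [b H1].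
  - exists b; now apply SR_TT.
  - exists false; now apply SR_TT_fail.
Qed.

Lemma sub_terminates_top_only G S T :
  top_only_ctx G -> top_only_ty S -> top_only_ty T -> sub_terminates G S T.
Proof.
  remember (ty_weight (ctx_weights G) S + ty_weight (ctx_weights G) T) as w eqn:Hw.
  revert G S T Hw; induction w as [w IH] using lt_wf_ind; intros G S T -> HG HS HT.
  destruct S as [|n|S1 S2| |S1 S2]; simpl in HS; [destruct T; sub_trivial | | | contradiction |].
  - apply sub_terminates_var; intros B HB.
    pose proof (get_bound_weight _ _ _ HB).
    eapply IH; eauto using top_only_get_bound; simpl; lia.
  - destruct T as [| |T1 T2| |]; try sub_trivial; simpl in HT.
    apply sub_terminates_arr; (eapply IH; [|reflexivity| | |]; [simpl; lia|tauto..]).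
  - destruct T as [| | | |T1 T2]; try sub_trivial; simpl in HT.
    apply sub_terminates_allTT; (eapply IH; [|reflexivity| | |]; [simpl; lia|simpl; tauto..]).
Qed.

Lemma sub_terminates_kpos G S T :
  top_only_ctx G -> kpos_ty S -> top_only_ty T -> sub_terminates G S T.
Proof.
  revert G T; induction S as [| |S1 _ S2 IH|S1 _ S2 IH|S1 _ S2 IH]; intros G T HG HS HT;
    simpl in HS; try (apply sub_terminates_top_only; simpl; tauto).
  - destruct T as [| |T1 T2| |]; try sub_trivial; simpl in HT.
    apply sub_terminates_arr; [apply sub_terminates_top_only | apply IH]; tauto.
  - destruct T as [| | | |T1 T2]; try sub_trivial; simpl in HT; [contradiction|].
    apply sub_terminates_allKT; [apply sub_terminates_top_only | apply IH]; simpl; tauto.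
  - destruct T as [| | | |T1 T2]; try sub_trivial; simpl in HT.
    apply sub_terminates_allTT; [apply sub_terminates_top_only | apply IH]; simpl; tauto.
Qed.

Lemma expose_terminates G R : exists R', expose G R R'.
Proof.
  remember (ty_weight (ctx_weights G) R) as w eqn:Hw.
  revert R Hw; induction w as [w IH] using lt_wf_ind; intros R ->.
  destruct R as [|n| | |]; try (eexists; apply EX_other; intros m E; discriminate).
  destruct (get_bound G n) as [B|] eqn:E.
  - pose proof (get_bound_weight _ _ _ E).
    destruct (IH (ty_weight (ctx_weights G) B)) with (R := B) as [R' HR'];
      [simpl; lia | reflexivity |].
    exists R'; eapply EX_var; eauto.
  - eexists; now apply EX_var_unbound.
Qed.

Lemma expose_kpos G R R' :
  expose G R R' -> top_only_ctx G -> kpos_ty R -> kpos_ty R'.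
Proof.
  induction 1; intros HG HR; auto.
  eauto using kpos_of_top_only, top_only_get_bound.
Qed.

Definition kpos_outcome (r : option ty) : Prop :=
  match r with Some T => kpos_ty T | None => True end.

Definition kpos_typing_terminates (G : ctx) (t : tm) : Prop :=
  exists r, ty_run G t r /\ kpos_outcome r.

Lemma kpos_typing_terminates_app G r s :
  top_only_ctx G -> kpos_typing_terminates G r -> kpos_typing_terminates G s ->
  kpos_typing_terminates G (tApp r s).
Proof.
  intros HG [[R|] [Hr HR]] Hs; [|exists None; split; [now apply TR_app_fail1 | exact I]].
  destruct Hs as [[S|] [Hs HS]]; [|exists None; split; [eapply TR_app_fail2; eauto | exact I]].
  destruct (expose_terminates G R) as [R' HR'].
  pose proof (expose_kpos _ _ _ HR' HG HR) as HkR'.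
  destruct R' as [| |S' T| |];
    try (exists None; split; [eapply TR_app_notarr; eauto; intros ? ? ?; discriminate | exact I]).
  destruct HkR' as [HS' HT].
  destruct (sub_terminates_kpos G S S' HG HS HS') as [b Hb].
  exists (if b then Some T else None); split; [eapply TR_app; eauto | now destruct b].
Qed.

Lemma kpos_typing_terminates_tapp G r S :
  top_only_ctx G -> top_only_ty S -> kpos_typing_terminates G r ->
  kpos_typing_terminates G (tTApp r S).
Proof.
  intros HG HS [[R|] [Hr HR]]; [|exists None; split; [now apply TR_tapp_fail | exact I]].
  destruct (expose_terminates G R) as [R' HR'].
  pose proof (expose_kpos _ _ _ HR' HG HR) as HkR'.
  destruct R' as [| | |S' T|S' T];
    try (exists None; split;
         [eapply TR_tapp_notall; eauto; intros ? ? ?; discriminate | exact I]);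
    destruct HkR' as [HS' HT];
    destruct (sub_terminates_kpos G S S' HG (kpos_of_top_only S HS) HS') as [b Hb];
    exists (if b then Some (open_ty T S) else None);
    (split; [eauto using TR_tapp_K, TR_tapp_T | destruct b; [exact (kpos_tsubst T 0 S HT HS) | exact I]]).
Qed.

Lemma kpos_typing_terminates_top_only G t :
  top_only_ctx G -> top_only_tm t -> kpos_typing_terminates G t.
Proof.
  revert G; induction t as [|n|S t IH|S t IH|r IHr s IHs|r IH S]; intros G HG Ht;
    simpl in Ht.
  - exists (Some TTop); split; [constructor | exact I].
  - exists (get_var G n); split; [constructor|].
    destruct (get_var G n) eqn:E; simpl; eauto using kpos_of_top_only, top_only_get_var.
  - destruct (IH (CVar S :: G)) as [res [Hrun Hres]]; [simpl; tauto | tauto |].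
    exists (option_map (TArr S) res); split; [now constructor | destruct res; simpl in *; tauto].
  - destruct (IH (CTVar S :: G)) as [res [Hrun Hres]]; [simpl; tauto | tauto |].
    exists (option_map (TAllK S) res); split; [now constructor | destruct res; simpl in *; tauto].
  - apply kpos_typing_terminates_app; [| apply IHr | apply IHs]; tauto.
  - apply kpos_typing_terminates_tapp; [| | apply IH]; tauto.
Qed.

Theorem proposition8p4 :
  forall (G : ctx) (t : tm),
    Ftop_term_in_context G t -> min_typing_terminates G t.
Proof.
  intros G t (_ & _ & HG & Ht).
  destruct (kpos_typing_terminates_top_only G t HG Ht) as [r [Hrun _]].
  now exists r.
Qed.
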